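(* (i) The admissible monomials of weight vector $(3)|^1$ in $P_5$ are exactly $X_{\alpha,\beta}$, $1\le\alpha<\beta\le5$; hence $\dim QP_5((3)|^1)=10$. (ii) The admissible monomials of weight vector $(3)|^2$ in $P_5$ in which every variable occurs are exactly the following 15: $x_1x_2x_3^{2}x_4^{2}x_5^{3}$, $x_1x_2x_3^{2}x_4^{3}x_5^{2}$, $x_1x_2x_3^{3}x_4^{2}x_5^{2}$, $x_1x_2^{2}x_3x_4^{2}x_5^{3}$, $x_1x_2^{2}x_3x_4^{3}x_5^{2}$, $x_1x_2^{2}x_3^{2}x_4x_5^{3}$, $x_1x_2^{2}x_3^{2}x_4^{3}x_5$, $x_1x_2^{2}x_3^{3}x_4x_5^{2}$, $x_1x_2^{2}x_3^{3}x_4^{2}x_5$, $x_1x_2^{3}x_3x_4^{2}x_5^{2}$, $x_1x_2^{3}x_3^{2}x_4x_5^{2}$, $x_1x_2^{3}x_3^{2}x_4^{2}x_5$, $x_1^{3}x_2x_3x_4^{2}x_5^{2}$, $x_1^{3}x_2x_3^{2}x_4x_5^{2}$, $x_1^{3}x_2x_3^{2}x_4^{2}x_5$. Consequently $\dim QP_5((3)|^2)=55$.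
   Context: $P_5=\mathbb F_2[x_1,\dots,x_5]$, $\deg x_i=1$, a module over the mod-2 Steenrod algebra $\mathcal A$ with augmentation ideal $\mathcal A^+$; $f\equiv g$ means $f+g\in\mathcal A^+P_5$. $X_{\alpha,\beta}=\prod_{l\in\{1,\dots,5\}\setminus\{\alpha,\beta\}}x_l$. For $x=x_1^{a_1}\cdots x_5^{a_5}$: weight vector $\omega_i(x)=\sum_j\alpha_{i-1}(a_j)$ ($\alpha_r(a)$ the $r$-th binary digit), exponent vector $\sigma(x)=(a_1,\dots,a_5)$, both ordered left-lexicographically; $\deg\omega=\sum_i2^{i-1}\omega_i$. For monomials of equal degree, $x<y$ iff $\omega(x)<\omega(y)$, or $\omega(x)=\omega(y)$ and $\sigma(x)<\sigma(y)$; $x$ is inadmissible if $x\equiv\sum_jy_j$ with monomials $y_j<x$, otherwise admissible. $(3)|^d$ is the weight vector with first $d$ entries $3$ and rest $0$. $P_5(\omega)$ is spanned by monomials $y$ with $\deg y=\deg\omega$ and $\omega(y)\le\omega$, $P_5^-(\omega)$ by those with $\omega(y)<\omega$, and $QP_5(\omega)=P_5(\omega)/(P_5(\omega)\cap(\mathcal A^+P_5+P_5^-(\omega)))$. *)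

From HB Require Import structures.
From mathcomp Require Import all_boot all_order all_algebra.
From mathcomp Require Import mpoly.

Set Implicit Arguments.
Unset Strict Implicit.
Unset Printing Implicit Defensive.

Import GRing.Theory.
Local Open Scope ring_scope.

(* The polynomial algebra P_5 over F_2; variable x_(i+1) is 'X_i, i : 'I_5. *)
Definition P5 := {mpoly 'F_2[5]}.
Definition mon5 := 'X_{1..5}.

(* Steenrod square Sq^k on a monomial x^a (Cartan formula with
   Sq^j(x_i^a) = C(a,j) x_i^(a+j)):
   Sq^k(x^a) = sum_{c, |c| = k} prod_i C(a_i,c_i) x^(a+c)  (mod 2). *)
Definition Sq_mon (k : nat) (a : mon5) : P5 :=
  \sum_(c : 'X_{1..5 < k.+1} | mdeg c == k)
     ((\prod_(i < 5) 'C(a i, c i))%:R : 'F_2) *: 'X_[(a + c)%MM].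

Definition Sq (k : nat) (p : P5) : P5 :=
  \sum_(m <- msupp p) p@_m *: Sq_mon k m.

(* A^+ P_5: since A^+ = sum_{k>=1} Sq^k A, A^+ P_5 is the F_2-span of
   the Sq^k f with k >= 1 and f in P_5. *)
Definition hit (f : P5) : Prop :=
  exists s : seq (nat * P5),
    all (fun kp => 0 < kp.1)%N s /\ f = \sum_(kp <- s) Sq kp.1 kp.2.

Definition steq (f g : P5) : Prop := hit (f + g).

Definition alpha (r a : nat) : nat := odd (a %/ 2 ^ r).

(* weight vector: omega_i(x) = sum_j alpha_{i-1}(a_j), i >= 1;
   here indexed from 0: wt x i = omega_{i+1}(x). *)
Definition wt (x : mon5) (i : nat) : nat := (\sum_(j < 5) alpha i (x j))%N.

Definition sigma (x : mon5) (j : 'I_5) : nat := x j.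

Definition lex_lt (f g : nat -> nat) : Prop :=
  exists i, (forall j, (j < i)%N -> f j = g j) /\ (f i < g i)%N.

Definition lex_le (f g : nat -> nat) : Prop :=
  lex_lt f g \/ (forall i, f i = g i).

Definition mon_lt (x y : mon5) : Prop :=
  mdeg x = mdeg y /\
  (lex_lt (wt x) (wt y) \/
   ((forall i, wt x i = wt y i) /\
    lex_lt (fun j => if (j < 5)%N then sigma x (inord j) else 0%N)
           (fun j => if (j < 5)%N then sigma y (inord j) else 0%N))).

Definition inadmissible (x : mon5) : Prop :=
  exists ys : seq mon5, (forall y, y \in ys -> mon_lt y x) /\
    steq 'X_[x] (\sum_(y <- ys) 'X_[y]).

Definition admissible (x : mon5) : Prop := ~ inadmissible x.

(* weight vectors are finite sequences of naturals, omega_(i+1) = nth 0 w i *)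
Definition wvec := seq nat.
Definition wfun (w : wvec) : nat -> nat := fun i => nth 0%N w i.
Definition degw (w : wvec) : nat := (\sum_(i < size w) 2 ^ i * nth 0 w i)%N.

Definition three_d (d : nat) : wvec := nseq d 3%N.

Definition inP (w : wvec) (f : P5) : Prop :=
  forall y, y \in msupp f -> mdeg y = degw w /\ lex_le (wt y) (wfun w).
Definition inPminus (w : wvec) (f : P5) : Prop :=
  forall y, y \in msupp f -> mdeg y = degw w /\ lex_lt (wt y) (wfun w).

Definition inW (w : wvec) (f : P5) : Prop :=
  inP w f /\ exists h g, hit h /\ inPminus w g /\ f = h + g.

(* dim QP_5(omega) = n : the quotient P_5(omega)/W has a basis of size n,
   i.e. there are b_1..b_n in P_5(omega) whose classes are linearly
   independent and span the quotient. *)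
Definition dimQP_is (w : wvec) (n : nat) : Prop :=
  exists b : n.-tuple P5,
    (forall i, inP w (tnth b i)) /\
    (forall c : 'I_n -> 'F_2,
        inW w (\sum_(i < n) c i *: tnth b i) -> forall i, c i = 0) /\
    (forall f, inP w f -> exists c : 'I_n -> 'F_2,
        inW w (f - \sum_(i < n) c i *: tnth b i)).

(* X_{alpha,beta} (0-based indices) *)
Definition Xab (a b : 'I_5) : mon5 :=
  [multinom (if (i == a) || (i == b) then 0 else 1)%N | i < 5].

Definition mk5 (a1 a2 a3 a4 a5 : nat) : mon5 :=
  [multinom (nth 0 [:: a1; a2; a3; a4; a5] i)%N | i < 5].

Definition list15 : seq mon5 :=
  [:: mk5 1 1 2 2 3; mk5 1 1 2 3 2; mk5 1 1 3 2 2; mk5 1 2 1 2 3;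
      mk5 1 2 1 3 2; mk5 1 2 2 1 3; mk5 1 2 2 3 1; mk5 1 2 3 1 2;
      mk5 1 2 3 2 1; mk5 1 3 1 2 2; mk5 1 3 2 1 2; mk5 1 3 2 2 1;
      mk5 3 1 1 2 2; mk5 3 1 2 1 2; mk5 3 1 2 2 1]%N.

From HB Require Import structures.
From mathcomp Require Import all_boot all_order all_algebra.
From mathcomp Require Import mpoly.

Set Implicit Arguments.
Unset Strict Implicit.
Unset Printing Implicit Defensive.

Import GRing.Theory.
Local Open Scope ring_scope.

(* Proposition 4 is reduced to finitely many certificates that are checked by
   computation.  Monomials are encoded by exponent lists, and polynomials over
   F_2 by lists of exponent lists counted modulo 2.
   - By the Cartan formula, Sq^k(x^a) is the explicit list sq_list k a.
   - For a set S of monomials of degree d, the functional phi_S (sum of the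
     coefficients at S) vanishes on A^+ P_5 as soon as the "sources" of S,
     i.e. the pairs (t in S, x^a) with x^t occurring in Sq^(d - deg a)(x^a),
     cancel in pairs (kills_hits).
   - x is admissible if some such phi_S takes the value 1 at x and 0 at all
     smaller monomials; x is inadmissible if x + (smaller terms) = Sq^k(x^a).
   - dim QP_5(w) = #BL if the basis BL has dual functionals phi_S vanishing on
     P_5^-(w) and every other monomial of weight w is congruent, via one
     Steenrod square, to basis elements plus elements of P_5^-(w). *)

Definition mon_of (l : seq nat) : mon5 := [multinom (nth 0 l i)%N | i < 5].
Definition exps (m : mon5) : seq nat := map (fun i => m (inord i)) (iota 0 5).

Lemma mon_ofE l i : mon_of l i = nth 0%N l i.
Proof. by rewrite mnmE. Qed.

Lemma size_exps m : size (exps m) = 5%N.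
Proof. by rewrite size_map size_iota. Qed.

Lemma nth_exps m (i : 'I_5) : nth 0%N (exps m) i = m i.
Proof. by rewrite (nth_map 0%N) ?size_iota // nth_iota // add0n inord_val. Qed.

Lemma exps_K m : mon_of (exps m) = m.
Proof. by apply/mnmP => i; rewrite mon_ofE nth_exps. Qed.

Lemma mon_of_eq l m : size l = 5%N -> (mon_of l == m) = (l == exps m).
Proof.
move=> sl; apply/eqP/eqP => [<-|->]; last exact: exps_K.
apply: (@eq_from_nth _ 0%N); first by rewrite size_exps.
move=> i; rewrite sl => Hi; have := nth_exps (mon_of l) (Ordinal Hi) => /= ->.
by rewrite mon_ofE.
Qed.

Lemma mon_of_K l : size l = 5%N -> exps (mon_of l) = l.
Proof. by move=> sl; apply/esym/eqP; rewrite -mon_of_eq. Qed.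

Lemma mdeg_mon_of l : size l = 5%N -> mdeg (mon_of l) = sumn l.
Proof.
case: l => [|a [|b [|c [|d [|e [|]]]]]] //= _.
by rewrite mdegE !big_ord_recl big_ord0 !mon_ofE /= !addnA addn0.
Qed.

Lemma sumn_exps m : sumn (exps m) = mdeg m.
Proof. by rewrite -{2}(exps_K m) mdeg_mon_of // size_exps. Qed.

(* Polynomials given by lists of exponent lists, counted with multiplicity:
   over F_2 only the parity of the multiplicities matters. *)
Definition pol (L : seq (seq nat)) : P5 := \sum_(l <- L) 'X_[mon_of l].

Lemma natr_F2 n : (n%:R : 'F_2) = (odd n)%:R.
Proof. by rewrite -(@Fp_nat_mod 2) // modn2; case: (odd n). Qed.

Lemma oppr_F2 (p : P5) : - p = p.
Proof.
apply/mpolyP => m; rewrite mcoeffN.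
exact: (oppr_pchar2 (pchar_Fp (isT : prime 2))).
Qed.

Lemma addrr_F2 (p : P5) : p + p = 0.
Proof. by rewrite -{1}(oppr_F2 p) addNr. Qed.

Lemma pol_coef L m : (pol L)@_m = (count (fun l => mon_of l == m) L)%:R.
Proof.
elim: L => [|l L IH]; first by rewrite /pol big_nil mcoeff0.
by rewrite /pol big_cons mcoeffD -/(pol L) IH mcoeffX /= natrD.
Qed.

Lemma count_mon_of L l : size l = 5%N -> all (fun t => size t == 5%N) L ->
  count (fun t => mon_of t == mon_of l) L = count_mem l L.
Proof.
move=> sl HL; apply: eq_in_count => t Ht /=.
by rewrite mon_of_eq ?mon_of_K //; apply/eqP/(allP HL).
Qed.

Lemma pol_coef5 L m : all (fun l => size l == 5%N) L ->
  (pol L)@_m = (odd (count_mem (exps m) L))%:R.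
Proof.
by move=> HL; rewrite -(exps_K m) pol_coef count_mon_of ?size_exps // exps_K natr_F2.
Qed.

Lemma pol_cons l L : pol (l :: L) = 'X_[mon_of l] + pol L.
Proof. by rewrite /pol big_cons. Qed.

Lemma pol_cat L1 L2 : pol (L1 ++ L2) = pol L1 + pol L2.
Proof. by rewrite /pol big_cat. Qed.

Definition same_parity (L1 L2 : seq (seq nat)) : bool :=
  all (fun t => odd (count_mem t L1) == odd (count_mem t L2)) (L1 ++ L2).

Lemma pol_eq L1 L2 : all (fun l => size l == 5%N) (L1 ++ L2) ->
  same_parity L1 L2 -> pol L1 = pol L2.
Proof.
rewrite all_cat => /andP [H1 H2] Hp; apply/mpolyP => m.
rewrite !pol_coef5 //; congr (_%:R).
case: (boolP (exps m \in L1 ++ L2)) => Hin; first by move/allP: Hp => /(_ _ Hin) /eqP ->.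
have /norP [Ha Hb] : ~~ ((exps m \in L1) || (exps m \in L2)) by rewrite -mem_cat.
by rewrite !(count_memPn _).
Qed.

Lemma Sq_mon_coef k (a u : mon5) : (Sq_mon k a)@_u =
  if (a <= u)%MM && (mdeg u == mdeg a + k)%N
  then ((\prod_(i < 5) 'C(a i, u i - a i))%N%:R : 'F_2) else 0.
Proof.
rewrite /Sq_mon raddf_sum /=.
under eq_bigr => c _ do rewrite mcoeffZ mcoeffX.
case: ifP => [/andP [Hle /eqP Hd] | Hn].
- have Hua : (u - a + a)%MM = u by rewrite submK.
  have Hk : mdeg (u - a)%MM = k.
    by apply/eqP; rewrite -(eqn_add2r (mdeg a)) -mdegD Hua Hd addnC.
  have Hc : (mdeg (u - a)%MM < k.+1)%N by rewrite Hk.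
  pose c0 := @BMultinom 5 k.+1 (u - a)%MM Hc.
  rewrite (bigD1 c0) /=; last by rewrite Hk.
  rewrite addmC Hua eqxx mulr1 [X in _ + X]big1 ?addr0.
    by congr (_%:R); apply: eq_bigr => i _; rewrite mnmBE.
  move=> c /andP [_ Hne]; case: eqP => [Hac|]; last by rewrite mulr0.
  exfalso; move/eqP: Hne; apply; apply: val_inj => /=.
  by rewrite -Hac addmC addmK.
- apply: big1 => c /eqP Hck; case: eqP => [Hac|]; last by rewrite mulr0.
  exfalso; move: Hn; rewrite -Hac mdegD Hck eqxx andbT => /negbT/negP; apply.
  by apply/mnm_lepP => i; rewrite mnmDE leq_addr.
Qed.

Lemma Sq_X k (m : mon5) : Sq k 'X_[m] = Sq_mon k m.
Proof. by rewrite /Sq msuppX big_seq1 mcoeffX eqxx scale1r. Qed.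

Fixpoint below (t : seq nat) : seq (seq nat) :=
  if t is x :: r then [seq a :: b | a <- iota 0 x.+1, b <- below r] else [:: [::]].

Lemma mem_below t l : (l \in below t) =
  (size l == size t) && [forall i : 'I_(size t), nth 0%N l i <= nth 0%N t i]%N.
Proof.
elim: t l => [|x r IH] l.
  by rewrite /= inE; case: l => [|y l] //=; apply/esym/forallP => -[].
apply/allpairsP/andP => [[[a b] [Ha Hb ->]]|[Hs /forallP Hf]].
  move: Hb Ha; rewrite IH mem_iota => /andP [/eqP Hs /forallP Hf] Ha.
  rewrite /= Hs; split => //; apply/forallP => -[[|i] Hi] /=.
    by move: Ha; rewrite add0n ltnS.
  exact: (Hf (Ordinal (Hi : i < size r)%N)).
case: l Hs Hf => // a b /eqP [Hs] Hf; exists (a, b); split => //.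
  by rewrite mem_iota add0n ltnS; exact: (Hf (Ordinal (isT : 0 < (size r).+1)%N)).
rewrite IH Hs eqxx /=; apply/forallP => -[i Hi].
exact: (Hf (Ordinal (Hi : i.+1 < (size r).+1)%N)).
Qed.

Lemma uniq_below t : uniq (below t).
Proof.
elim: t => [|x r IH] //.
change (uniq [seq a :: b | a <- iota 0 x.+1, b <- below r]).
apply: allpairs_uniq => //; first exact: iota_uniq.
by move=> [a1 b1] [a2 b2] _ _ /= [-> ->].
Qed.

Lemma count_mem_filter (T : eqType) (P : pred T) x (s : seq T) :
  count_mem x [seq y <- s | P y] = if P x then count_mem x s else 0%N.
Proof.
rewrite count_filter; case: ifP => Hp; [|rewrite -(count_pred0 s)];
  by apply: eq_count => y /=; case: eqP => //= ->; rewrite Hp.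
Qed.

Lemma exps_below m t : size t = 5%N -> (exps m \in below t) = (m <= mon_of t)%MM.
Proof.
move=> Hs; rewrite mem_below size_exps Hs eqxx /=.
apply/forallP/mnm_lepP => H i; first by rewrite mon_ofE -nth_exps; exact: (H i).
by move: (H i); rewrite mon_ofE nth_exps.
Qed.

Definition cartan (a t : seq nat) : nat :=
  foldr muln 1%N (map (fun i => 'C(nth 0 a i, nth 0 t i - nth 0 a i)) (iota 0 5)).

Lemma cartanE a t :
  cartan a t = (\prod_(i < 5) 'C(nth 0 a i, nth 0 t i - nth 0 a i))%N.
Proof. by rewrite /cartan foldrE big_map -[iota 0 5]/(index_iota 0 5) big_mkord. Qed.

Lemma cartan_exps m t :
  cartan (exps m) t = (\prod_(i < 5) 'C(m i, mon_of t i - m i))%N.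
Proof. by rewrite cartanE; apply: eq_bigr => i _; rewrite nth_exps mon_ofE. Qed.

Definition le_list (a u : seq nat) : bool := all (fun i => nth 0 a i <= nth 0 u i)%N (iota 0 5).

Lemma le_list_exps a m : le_list a (exps m) = (mon_of a <= m)%MM.
Proof.
apply/allP/mnm_lepP => H i.
  by rewrite mon_ofE -nth_exps; apply: H; rewrite mem_iota /= add0n.
rewrite mem_iota /= add0n => Hi.
by have := H (Ordinal Hi); rewrite mon_ofE (nth_exps m (Ordinal Hi)).
Qed.

(* The exponent lists of the monomials of Sq^k(x^a); they lie below 2a
   since C(a_i, u_i - a_i) = 0 when u_i > 2 a_i. *)
Definition sq_list (k : nat) (a : seq nat) : seq (seq nat) :=
  [seq u <- below (map (fun e => e.*2) a) |
    le_list a u && (sumn u == sumn a + k)%N && odd (cartan a u)].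

Lemma sq_list_size k a : size a = 5%N -> all (fun u => size u == 5%N) (sq_list k a).
Proof.
move=> sa; apply/allP => u; rewrite mem_filter mem_below => /and3P [_ /eqP -> _].
by rewrite size_map sa.
Qed.

Lemma Sq_mon_list k a : size a = 5%N -> Sq_mon k (mon_of a) = pol (sq_list k a).
Proof.
move=> sa; apply/mpolyP => m.
rewrite pol_coef5 ?sq_list_size // Sq_mon_coef /sq_list count_mem_filter.
rewrite le_list_exps sumn_exps -mdeg_mon_of // cartanE count_uniq_mem ?uniq_below //.
under [in X in odd X]eq_bigr => i _ do rewrite nth_exps -mon_ofE.
case: (mon_of a <= m)%MM; case: (mdeg m == _) => //=.
rewrite natr_F2; case Hodd: (odd _) => //=.
rewrite mem_below size_exps size_map sa eqxx /=.
suff -> : [forall i : 'I_5, nth 0 (exps m) i <= nth 0 [seq e.*2 | e <- a] i]%N by [].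
apply/forallP => i; rewrite nth_exps (nth_map 0%N) ?sa // leqNgt; apply/negP => Hgt.
have H0 : 'C(mon_of a i, m i - mon_of a i) = 0%N.
  by apply: bin_small; rewrite mon_ofE ltn_subRL addnn.
by move: Hodd; rewrite (bigD1 i) //= H0 mul0n.
Qed.

Definition sq_sources (t : seq nat) : seq (seq nat) :=
  [seq a <- below t | (sumn a < sumn t)%N && odd (cartan a t)].

Lemma Sq_mon_coef_sources k m t : (0 < k)%N -> size t = 5%N ->
  sumn t = (mdeg m + k)%N ->
  (Sq_mon k m)@_(mon_of t) = (count_mem (exps m) (sq_sources t))%:R.
Proof.
move=> k0 st dt; rewrite Sq_mon_coef mdeg_mon_of // dt eqxx andbT /sq_sources.
rewrite count_mem_filter count_uniq_mem ?uniq_below // exps_below // sumn_exps dt cartan_exps.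
rewrite -{1}(addn0 (mdeg m)) ltn_add2l k0 andTb natr_F2.
by case: (m <= mon_of t)%MM; case: odd.
Qed.

Definition even_mult (D : seq (seq nat)) : bool :=
  all (fun a => ~~ odd (count_mem a D)) D.

Lemma even_multP D a : even_mult D -> ~~ odd (count_mem a D).
Proof. by move=> /allP H; case: (boolP (a \in D)) => [/H //|/count_memPn ->]. Qed.

Definition phi (S : seq (seq nat)) (p : P5) : 'F_2 := \sum_(t <- S) p@_(mon_of t).

Lemma phiD S p q : phi S (p + q) = phi S p + phi S q.
Proof. by rewrite /phi -big_split; apply: eq_bigr => t _; rewrite mcoeffD. Qed.

Lemma phiZ S c p : phi S (c *: p) = c * phi S p.
Proof. by rewrite /phi mulr_sumr; apply: eq_bigr => t _; rewrite mcoeffZ. Qed.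

Lemma phi_sum S I (r : seq I) (F : I -> P5) :
  phi S (\sum_(i <- r) F i) = \sum_(i <- r) phi S (F i).
Proof.
elim: r => [|i r IH]; last by rewrite !big_cons phiD IH.
by rewrite !big_nil /phi big1 // => t _; rewrite mcoeff0.
Qed.

Lemma phiX S m : phi S 'X_[m] = (count (fun t => mon_of t == m) S)%:R.
Proof.
rewrite /phi; elim: S => [|t S IH]; first by rewrite big_nil.
by rewrite big_cons IH mcoeffX /= natrD eq_sym.
Qed.

Definition homog_list (d : nat) (S : seq (seq nat)) : bool :=
  all (fun t => (size t == 5%N) && (sumn t == d)) S.

(* S gives a functional vanishing on A^+ P_5 when all sources of its
   monomials, taken together, occur an even number of times. *)
Definition kills_hits (S : seq (seq nat)) : bool :=
  even_mult (flatten (map sq_sources S)).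

Lemma phi_Sq_mon S d k m : homog_list d S -> kills_hits S -> (0 < k)%N ->
  phi S (Sq_mon k m) = 0.
Proof.
move=> HS Hk k0; have St t : t \in S -> size t = 5%N /\ sumn t = d.
  by move=> /(allP HS) /andP [/eqP -> /eqP ->].
case: (eqVneq d (mdeg m + k)%N) => Hd; last first.
  apply: big1_seq => t /St [st dt].
  by rewrite Sq_mon_coef mdeg_mon_of // dt (negbTE Hd) andbF.
rewrite /phi (eq_big_seq (fun t => (count_mem (exps m) (sq_sources t))%:R)); last first.
  by move=> t /St [st dt]; rewrite Sq_mon_coef_sources // dt.
rewrite -natr_sum natr_F2; set n := (\sum_(t <- S) _)%N.
suff -> : n = count_mem (exps m) (flatten (map sq_sources S)).
  by rewrite (negbTE (even_multP _ Hk)).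
by rewrite count_flatten sumnE !big_map.
Qed.

Lemma phi_hit S d h : homog_list d S -> kills_hits S -> hit h -> phi S h = 0.
Proof.
move=> HS Hk [s [Hpos ->]]; rewrite phi_sum big_seq big1 // => kp Hkp.
have k0 : (0 < kp.1)%N by move/allP: Hpos => /(_ _ Hkp).
by rewrite /Sq phi_sum big1 // => m _; rewrite phiZ (phi_Sq_mon _ HS Hk k0) mulr0.
Qed.

(* Weight vectors and the monomial order, computed on exponent lists.  All
   exponents occurring below are < 16, so only the first four weights matter. *)
Definition wt_list (l : seq nat) (i : nat) : nat := sumn (map (alpha i) l).

Lemma wt_mon_of l i : size l = 5%N -> wt (mon_of l) i = wt_list l i.
Proof.
case: l => [|a [|b [|c [|d [|e [|]]]]]] //= _.
by rewrite /wt /wt_list !big_ord_recl big_ord0 !mon_ofE /= !addnA addn0.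
Qed.

Lemma wt_list_high l i : all (fun e => e < 16)%N l -> (4 <= i)%N -> wt_list l i = 0%N.
Proof.
move=> Hl Hi; rewrite /wt_list; elim: l Hl => //= a l IH /andP [Ha Hl].
rewrite IH // addn0 /alpha divn_small //.
by apply: leq_trans Ha _; rewrite -[16%N]/(2 ^ 4)%N leq_exp2l.
Qed.

Definition small5 (l : seq nat) : bool := (size l == 5%N) && all (fun e => e < 16)%N l.

Definition lexb (f g : nat -> nat) (N : nat) : bool :=
  has (fun i => all (fun j => f j == g j) (iota 0 i) && (f i < g i)%N) (iota 0 N).

Lemma lexbP f g N : (forall i, (N <= i)%N -> f i = g i) -> lex_lt f g <-> lexb f g N.
Proof.
move=> Hfg; split.
  move=> [i [Hj Hi]]; apply/hasP; exists i.
    rewrite mem_iota /= add0n; case: (ltnP i N) => // /Hfg Hc.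
    by move: Hi; rewrite Hc ltnn.
  by rewrite Hi andbT; apply/allP => j; rewrite mem_iota /= add0n => /Hj ->.
move=> /hasP [i _ /andP [/allP Ha Hi]]; exists i; split => // j Hj.
by apply/eqP/Ha; rewrite mem_iota.
Qed.

Lemma lex_lt_ext f f' g g' : f =1 f' -> g =1 g' -> lex_lt f g -> lex_lt f' g'.
Proof.
move=> Hf Hg [i [Hj Hi]]; exists i; split; last by rewrite -Hf -Hg.
by move=> j /Hj; rewrite Hf Hg.
Qed.

Definition lt_list (x y : seq nat) : bool :=
  (sumn x == sumn y) &&
  (lexb (wt_list x) (wt_list y) 4 ||
   (all (fun i => wt_list x i == wt_list y i) (iota 0 4) && lexb (nth 0%N x) (nth 0%N y) 5)).

Lemma sigma_mon_of x : size x = 5%N ->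
  (fun j => if (j < 5)%N then sigma (mon_of x) (inord j) else 0%N) =1 nth 0%N x.
Proof.
move=> sx j; case: ltnP => Hj; first by rewrite /sigma mon_ofE inordK.
by rewrite nth_default // sx.
Qed.

Lemma lt_listP x y : small5 x -> small5 y -> mon_lt (mon_of x) (mon_of y) <-> lt_list x y.
Proof.
move=> /andP [/eqP sx bx] /andP [/eqP sy bY].
have Ew i : (4 <= i)%N -> wt_list x i = wt_list y i by move=> Hi; rewrite !wt_list_high.
have Es i : (5 <= i)%N -> nth 0%N x i = nth 0%N y i by move=> Hi; rewrite !nth_default ?sx ?sy.
have Wx : wt (mon_of x) =1 wt_list x by move=> i; rewrite wt_mon_of.
have Wy : wt (mon_of y) =1 wt_list y by move=> i; rewrite wt_mon_of.
rewrite /mon_lt /lt_list !mdeg_mon_of //; split.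
  move=> [-> [Hl|[He Hs]]]; rewrite eqxx andTb; apply/orP.
    by left; apply/(lexbP Ew); apply: lex_lt_ext Hl.
  right; apply/andP; split; first by apply/allP => i _; rewrite -Wx -Wy He.
  by apply/(lexbP Es); apply: lex_lt_ext Hs; apply: sigma_mon_of.
move=> /andP [/eqP -> /orP [/(lexbP Ew) Hl | /andP [/allP He /(lexbP Es) Hs]]]; split => //.
  by left; apply: lex_lt_ext Hl => i; rewrite ?Wx ?Wy.
right; split.
  move=> i; rewrite Wx Wy; case: (ltnP i 4) => Hi; last exact: Ew.
  by apply/eqP/He; rewrite mem_iota.
by apply: lex_lt_ext Hs => j; rewrite sigma_mon_of.
Qed.

Definition adm_ok (d : nat) (l : seq nat) (S : seq (seq nat)) : bool :=
  [&& small5 l, all small5 S, homog_list d S, kills_hits S,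
      odd (count_mem l S) & all (fun t => ~~ lt_list t l) S].

Lemma adm_okP d l S : adm_ok d l S -> admissible (mon_of l).
Proof.
move=> /and5P [sl sS HS Hk /andP [Hodd Hmin]] [ys [Hlt Hhit]].
have SS t : t \in S -> size t = 5%N by move=> /(allP HS) /andP [/eqP].
have := phi_hit HS Hk Hhit; rewrite phiD phiX phi_sum big_seq big1.
  rewrite addr0 count_mon_of; first by rewrite natr_F2 Hodd => /eqP; rewrite oner_eq0.
    by case/andP: sl => /eqP.
  by apply/allP => t /SS ->.
move=> y /Hlt Hy; rewrite phiX.
suff -> : count (fun t => mon_of t == y) S = 0%N by [].
apply/eqP; rewrite eqn0Ngt -has_count; apply/hasPn => t Ht /=; apply/eqP => Hty.
move: Hy; rewrite -Hty (lt_listP (allP sS _ Ht) sl) => Hb.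
by move: (allP Hmin _ Ht); rewrite Hb.
Qed.

Lemma hit_Sq k p : (0 < k)%N -> hit (Sq k p).
Proof. by move=> k0; exists [:: (k, p)]; rewrite /= k0 big_seq1. Qed.

Definition inadm_ok (l : seq nat) (ys : seq (seq nat)) (k : nat) (a : seq nat) : bool :=
  [&& small5 l, all small5 ys, all (lt_list^~ l) ys, (0 < k)%N, size a == 5%N &
      same_parity (l :: ys) (sq_list k a)].

Lemma inadm_okP l ys k a : inadm_ok l ys k a -> inadmissible (mon_of l).
Proof.
move=> /and5P [sl sys Hlt k0 /andP [/eqP sa Hpar]]; exists (map mon_of ys); split.
  move=> y /mapP [t Ht ->]; apply/lt_listP => //; [exact: (allP sys) | exact: (allP Hlt)].
rewrite /steq; have -> : 'X_[mon_of l] + \sum_(y <- map mon_of ys) 'X_[y] = pol (l :: ys).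
  by rewrite pol_cons /pol big_map.
rewrite (pol_eq _ Hpar) -?Sq_mon_list // -?Sq_X; first exact: hit_Sq.
rewrite all_cat sq_list_size // andbT /= (andP sl).1.
by apply/allP => y /(allP sys) /andP [].
Qed.

Definition degc (w : wvec) : nat :=
  sumn (map (fun i => 2 ^ i * nth 0 w i)%N (iota 0 (size w))).

Lemma degcE w : degc w = degw w.
Proof.
rewrite /degc /degw sumnE big_map.
by rewrite -(big_mkord xpredT (fun i => 2 ^ i * nth 0 w i)%N) /index_iota subn0.
Qed.

Definition lower_list (w : wvec) (t : seq nat) : bool :=
  (sumn t == degc w) && lexb (wt_list t) (nth 0%N w) 4.

Definition wt_is (w : wvec) (t : seq nat) : bool :=
  all (fun i => wt_list t i == nth 0%N w i) (iota 0 4).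

Lemma wt_list_w w t i : (size w <= 4)%N -> small5 t -> (4 <= i)%N -> wt_list t i = nth 0%N w i.
Proof.
by move=> sw /andP [_ bt] Hi; rewrite wt_list_high // nth_default //; apply: leq_trans sw Hi.
Qed.

Lemma lower_listP w t : (size w <= 4)%N -> small5 t ->
  (mdeg (mon_of t) = degw w /\ lex_lt (wt (mon_of t)) (wfun w)) <-> lower_list w t.
Proof.
move=> sw ot; have E := wt_list_w sw ot; case/andP: ot => /eqP st _.
have W : wt (mon_of t) =1 wt_list t by move=> i; rewrite wt_mon_of.
rewrite /lower_list mdeg_mon_of // degcE; split.
  by move=> [-> H]; rewrite eqxx /=; apply/(lexbP E); apply: lex_lt_ext H.
by move=> /andP [/eqP -> /(lexbP E) H]; split => //; apply: lex_lt_ext H => i; rewrite ?W.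
Qed.

Lemma wt_isP w t : (size w <= 4)%N -> small5 t ->
  (forall i, wt (mon_of t) i = wfun w i) <-> wt_is w t.
Proof.
move=> sw ot; have E := wt_list_w sw ot; case/andP: ot => /eqP st _; split.
  by move=> H; apply/allP => i _; rewrite -wt_mon_of // H.
move=> /allP H i; rewrite wt_mon_of // /wfun; case: (ltnP i 4) => Hi; last exact: E.
by apply/eqP/H; rewrite mem_iota.
Qed.

Fixpoint comps (n d : nat) : seq (seq nat) :=
  if n is n'.+1 then flatten [seq [seq a :: r | r <- comps n' (d - a)] | a <- iota 0 d.+1]
  else (if d == 0%N then [:: [::]] else [::]).

Lemma comps_complete (l : seq nat) : l \in comps (size l) (sumn l).
Proof.
elim: l => [|a r IH] //.
change (a :: r \in flatten [seq [seq a0 :: r0 | r0 <- comps (size r) (a + sumn r - a0)]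
                          | a0 <- iota 0 (a + sumn r).+1]).
apply/flattenP.
exists [seq a :: r0 | r0 <- comps (size r) (a + sumn r - a)].
  by apply/mapP; exists a => //; rewrite mem_iota /= add0n ltnS leq_addr.
by rewrite addKn; apply/mapP; exists r.
Qed.

Lemma exps_comps m : exps m \in comps 5 (mdeg m).
Proof. by have := comps_complete (exps m); rewrite size_exps sumn_exps. Qed.

Lemma hit0 : hit 0.
Proof. by exists [::]; rewrite big_nil. Qed.

Lemma hitD h1 h2 : hit h1 -> hit h2 -> hit (h1 + h2).
Proof.
move=> [s1 [H1 ->]] [s2 [H2 ->]]; exists (s1 ++ s2).
by rewrite all_cat H1 H2 big_cat.
Qed.

Lemma hitZ (c : 'F_2) h : hit h -> hit (c *: h).
Proof.
have [->|->] : c = 0 \/ c = 1 by case: c => [[|[|]]] // Hc; [left|right]; apply: val_inj.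
  by rewrite scale0r => _; exact: hit0.
by rewrite scale1r.
Qed.

Definition supp_in (Q : mon5 -> Prop) (p : P5) : Prop := forall y, y \in msupp p -> Q y.

Lemma supp_in0 Q : supp_in Q 0.
Proof. by move=> y; rewrite msupp0. Qed.

Lemma supp_inD Q p q : supp_in Q p -> supp_in Q q -> supp_in Q (p + q).
Proof. by move=> Hp Hq y /msuppD_le; rewrite mem_cat => /orP [/Hp|/Hq]. Qed.

Lemma supp_inB Q p q : supp_in Q p -> supp_in Q q -> supp_in Q (p - q).
Proof. by move=> Hp Hq y /msuppB_le; rewrite mem_cat => /orP [/Hp|/Hq]. Qed.

Lemma supp_inZ Q c p : supp_in Q p -> supp_in Q (c *: p).
Proof. by move=> Hp y /msuppZ_le /Hp. Qed.

Lemma supp_in_sum Q (I : eqType) (r : seq I) (P : pred I) (F : I -> P5) :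
  (forall i, P i -> supp_in Q (F i)) -> supp_in Q (\sum_(i <- r | P i) F i).
Proof.
move=> H y /msupp_sum_le /flattenP [s /mapP [i Hi ->]]; apply: H.
by move: Hi; rewrite mem_filter => /andP [].
Qed.

Lemma supp_inX (Q : mon5 -> Prop) m : Q m -> supp_in Q 'X_[m].
Proof. by move=> Hm y; rewrite msuppX inE => /eqP ->. Qed.

Lemma sum_count n (V : nat -> P5) (nf : seq nat) : all (fun j => j < n)%N nf ->
  \sum_(j < n) ((count_mem (nat_of_ord j) nf)%:R : 'F_2) *: V j = \sum_(j <- nf) V j.
Proof.
elim: nf => [_|x nf IH /andP [Hx Hnf]].
  by rewrite big_nil big1 // => j _; rewrite scale0r.
rewrite big_cons -IH //.
under eq_bigr => j _ do rewrite /= natrD scalerDl.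
rewrite big_split /=; congr (_ + _).
rewrite (bigD1 (Ordinal Hx)) //= eqxx scale1r big1 ?addr0 // => j Hj.
suff /negbTE -> : x != j by rewrite scale0r.
by apply: contra Hj => /eqP Hxj; apply/eqP/val_inj.
Qed.

(* Spanning certificate (k, a, nf, gl) for a monomial x^l of weight vector w
   outside the basis: Sq^k(x^a) = x^l + sum_(j in nf) b_j + sum_(t in gl) x^t
   with k > 0 and every x^t in P_5^-(w). *)
Definition span_cert := (nat * seq nat * seq nat * seq (seq nat))%type.

Definition span_ok (w : wvec) (BL : seq (seq nat)) (C : seq nat -> option span_cert)
    (l : seq nat) : bool :=
  (l \in BL) ||
  if C l is Some (k, a, nf, gl) then
    [&& (0 < k)%N, size a == 5%N, all (fun j => j < size BL)%N nf,
        all (fun t => small5 t && lower_list w t) gl &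
        same_parity (l :: map (nth [::] BL) nf ++ gl) (sq_list k a)]
  else false.

Definition dual_ok (w : wvec) (BL : seq (seq nat)) (S : seq (seq nat)) (i : nat) : bool :=
  [&& all small5 S, homog_list (degc w) S, all (fun t => ~~ lower_list w t) S,
      kills_hits S &
      all (fun j => odd (count_mem (nth [::] BL j) S) == (i == j)) (iota 0 (size BL))].

Definition dim_ok (w : wvec) (BL : seq (seq nat)) (F : seq (seq (seq nat)))
    (C : seq nat -> option span_cert) : bool :=
  [&& (size w <= 4)%N, (degc w < 16)%N,
      all (fun l => small5 l && (sumn l == degc w) && wt_is w l) BL,
      all (fun i => dual_ok w BL (nth [::] F i) i) (iota 0 (size BL)) &
      all (fun l => wt_is w l ==> span_ok w BL C l) (comps 5 (degc w))].

Definition basis_of (BL : seq (seq nat)) : (size BL).-tuple P5 :=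
  map_tuple (fun l => 'X_[mon_of l]) (in_tuple BL).

Lemma tnth_basis BL i : tnth (basis_of BL) i = 'X_[mon_of (nth [::] BL i)].
Proof. by rewrite tnth_map (tnth_nth [::]). Qed.

Section DimensionCertificate.

Variables (w : wvec) (BL : seq (seq nat)) (F : seq (seq (seq nat))).
Variable C : seq nat -> option span_cert.
Hypothesis Hok : dim_ok w BL F C.

Local Notation n := (size BL).
Local Notation b := (basis_of BL).

Let sw : (size w <= 4)%N.
Proof. by case/and5P: Hok. Qed.

Let BLok j : (j < n)%N ->
  [/\ small5 (nth [::] BL j), sumn (nth [::] BL j) = degc w & wt_is w (nth [::] BL j)].
Proof.
case/and5P: Hok => _ _ HB _ _ Hj.
by have /andP [/andP [? /eqP ?] ?] := allP HB _ (mem_nth [::] Hj).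
Qed.

Let Fok i : (i < n)%N -> dual_ok w BL (nth [::] F i) i.
Proof. by case/and5P: Hok => _ _ _ /allP HF _ Hi; apply: HF; rewrite mem_iota. Qed.

Lemma basis_inP j : (j < n)%N -> inP w 'X_[mon_of (nth [::] BL j)].
Proof.
move=> /BLok [o s e]; apply: supp_inX; split; last by right; apply/(wt_isP sw o).
by rewrite mdeg_mon_of ?s ?degcE //; case/andP: o => /eqP.
Qed.

Lemma phi_dual_basis (i j : 'I_n) :
  phi (nth [::] F i) (tnth b j) = (i == j :> nat)%:R.
Proof.
have /and5P [oS HS _ _ /allP Hd] := Fok (ltn_ord i).
have [/andP [/eqP sj _] _ _] := BLok (ltn_ord j).
rewrite tnth_basis phiX count_mon_of //; last by apply/allP => t /(allP oS) /andP [].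
by rewrite natr_F2; move: (Hd j); rewrite mem_iota /= => /(_ (ltn_ord j)) /eqP ->.
Qed.

Lemma phi_dual_lower i g : (i < n)%N -> inPminus w g -> phi (nth [::] F i) g = 0.
Proof.
move=> /Fok /and5P [oS _ Hnl _ _] Hg; rewrite /phi big_seq big1 // => t Ht.
case: (eqVneq g@_(mon_of t) 0) => //; rewrite -mcoeff_msupp => /Hg.
by move/(lower_listP sw (allP oS _ Ht)) => Hl; move: (allP Hnl _ Ht); rewrite Hl.
Qed.

Lemma basis_independent (c : 'I_n -> 'F_2) :
  inW w (\sum_(j < n) c j *: tnth b j) -> forall i, c i = 0.
Proof.
move=> [_ [h [g [Hh [Hg Heq]]]]] i.
have /and3P [_ HS /andP [_ /andP [Hk _]]] := Fok (ltn_ord i).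
have := congr1 (phi (nth [::] F i)) Heq.
rewrite phiD (phi_hit HS Hk Hh) (phi_dual_lower (ltn_ord i) Hg) addr0 phi_sum.
under eq_bigr => j _ do rewrite phiZ phi_dual_basis.
rewrite (bigD1 i) //= eqxx mulr1 big1 ?addr0 // => j Hj.
by rewrite (_ : (i == j :> nat) = false) ?mulr0 //; apply/negbTE; rewrite eq_sym.
Qed.

Definition reducible (f : P5) : Prop :=
  exists c : 'I_n -> 'F_2, exists h g, hit h /\ inPminus w g /\
    f - \sum_(i < n) c i *: tnth b i = h + g.

Lemma reducible0 : reducible 0.
Proof.
exists (fun _ => 0), 0, 0; split; first exact: hit0.
split; first exact: supp_in0.
by rewrite big1 ?subr0 ?addr0 // => j _; rewrite scale0r.
Qed.

Lemma reducibleD p q : reducible p -> reducible q -> reducible (p + q).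
Proof.
move=> [c [h [g [Hh [Hg Hp]]]]] [c' [h' [g' [Hh' [Hg' Hq]]]]].
exists (fun i => c i + c' i), (h + h'), (g + g'); split; first exact: hitD.
split; first exact: supp_inD.
under eq_bigr => j _ do rewrite scalerDl.
by rewrite big_split opprD addrACA Hp Hq addrACA.
Qed.

Lemma reducibleZ a p : reducible p -> reducible (a *: p).
Proof.
move=> [c [h [g [Hh [Hg Hp]]]]].
exists (fun i => a * c i), (a *: h), (a *: g); split; first exact: hitZ.
split; first exact: supp_inZ.
under eq_bigr => j _ do rewrite -scalerA.
by rewrite -scaler_sumr -scalerBr Hp scalerDr.
Qed.

Lemma reducible_lower m : mdeg m = degw w -> lex_lt (wt m) (wfun w) -> reducible 'X_[m].
Proof.
move=> Hd Hl; exists (fun _ => 0), 0, 'X_[m]; split; first exact: hit0.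
split; first exact: supp_inX.
by rewrite big1 ?subr0 ?add0r // => j _; rewrite scale0r.
Qed.

Lemma reducible_basis l : l \in BL -> reducible 'X_[mon_of l].
Proof.
move=> Hin; have Hj : (index l BL < n)%N by rewrite index_mem.
exists (fun i => (i == Ordinal Hj)%:R), 0, 0; split; first exact: hit0.
split; first exact: supp_in0.
rewrite (bigD1 (Ordinal Hj)) //= eqxx scale1r big1 ?addr0.
  by rewrite tnth_basis /= nth_index // subrr.
by move=> j /negbTE ->; rewrite scale0r.
Qed.

Lemma reducible_cert l k a nf gl : size l = 5%N -> (0 < k)%N -> size a = 5%N ->
  all (fun j => j < n)%N nf -> all (fun t => small5 t && lower_list w t) gl ->
  same_parity (l :: map (nth [::] BL) nf ++ gl) (sq_list k a) ->
  reducible 'X_[mon_of l].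
Proof.
move=> sl k0 sa Hnf Hgl Hpar.
exists (fun i => (count_mem (nat_of_ord i) nf)%:R), (Sq k 'X_[mon_of a]), (pol gl).
split; first exact: hit_Sq.
split.
  rewrite /pol big_seq; apply: supp_in_sum => t /(allP Hgl) /andP [ot lt].
  by apply: supp_inX; apply/(lower_listP sw ot).
under eq_bigr => j _ do rewrite tnth_basis.
rewrite (sum_count (fun j => 'X_[mon_of (nth [::] BL j)]) Hnf).
rewrite -(big_map (nth [::] BL) xpredT (fun l => 'X_[mon_of l])) -/(pol _).
have Hsz : all (fun l => size l == 5%N) ((l :: map (nth [::] BL) nf ++ gl) ++ sq_list k a).
  rewrite all_cat sq_list_size // andbT /= sl eqxx andTb all_cat; apply/andP; split.
    by apply/allP => t /mapP [j /(allP Hnf) /BLok [/andP [? _] _ _] ->].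
  by apply/allP => t /(allP Hgl) /andP [/andP []].
have := pol_eq Hsz Hpar; rewrite pol_cons pol_cat -Sq_mon_list // -Sq_X => <-.
by rewrite oppr_F2 -!addrA addrr_F2 addr0.
Qed.

Lemma reducible_mon m : mdeg m = degw w -> lex_le (wt m) (wfun w) -> reducible 'X_[m].
Proof.
move=> Hd [Hl|He]; first exact: reducible_lower.
case/and5P: Hok => _ dw _ _ /allP Hspan.
rewrite -degcE in Hd; set l := exps m.
have ol : small5 l.
  apply/andP; split; first by rewrite size_exps.
  apply/allP => e /mapP [i _ ->].
  by apply: leq_ltn_trans dw; rewrite -Hd mdegE (bigD1 (inord i)) //= leq_addr.
have wl : wt_is w l by apply/(wt_isP sw ol); rewrite exps_K.
have := implyP (Hspan l _) wl; rewrite -Hd exps_comps -[m]exps_K => /(_ isT).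
case/orP; first exact: reducible_basis.
case: (C l) => [[[[k a] nf] gl]|] //.
move=> /and5P [k0 /eqP sa Hnf Hgl Hpar].
by apply: (reducible_cert _ k0 sa Hnf Hgl Hpar); rewrite size_exps.
Qed.

Lemma basis_spanning f : inP w f ->
  exists c : 'I_n -> 'F_2, inW w (f - \sum_(i < n) c i *: tnth b i).
Proof.
move=> Hf.
have [c [h [g [Hh [Hg Heq]]]]] : reducible f.
  rewrite (mpolyE f) big_seq; apply: big_ind => //; [exact: reducible0 | exact: reducibleD|].
  by move=> m /Hf [Hd Hl]; apply/reducibleZ/reducible_mon.
exists c; split; last by exists h, g.
apply: supp_inB => //; apply: supp_in_sum => j _; apply: supp_inZ.
by rewrite tnth_basis; apply: basis_inP.
Qed.

End DimensionCertificate.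

Lemma dim_cert w BL F C : dim_ok w BL F C -> dimQP_is w (size BL).
Proof.
move=> Hok; exists (basis_of BL); split.
  by move=> i; rewrite tnth_basis; exact: (basis_inP Hok (ltn_ord i)).
by split; [exact: (basis_independent Hok) | exact: (basis_spanning Hok)].
Qed.

Lemma wt_bound (x : mon5) r : (forall i, (r <= i)%N -> wt x i = 0%N) ->
  forall j, (x j < 2 ^ r)%N.
Proof.
move=> H j; rewrite ltnNge; apply/negP => Hle.
have x0 : (0 < x j)%N by apply: leq_trans Hle; rewrite expn_gt0.
set e := trunc_log 2 (x j).
have H1 : (2 ^ e <= x j)%N := trunc_logP (isT : (1 < 2)%N) x0.
have H2 : (x j < 2 ^ e.+1)%N := trunc_log_ltn (x j) (isT : (1 < 2)%N).
have re : (r <= e)%N.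
  by rewrite -ltnS -(ltn_exp2l _ _ (isT : (1 < 2)%N)); apply: leq_ltn_trans Hle H2.
have q1 : (x j %/ 2 ^ e = 1)%N.
  apply/eqP; rewrite eqn_leq; apply/andP; split.
    by rewrite -ltnS ltn_divLR ?expn_gt0 // -expnS.
  by rewrite leq_divRL ?expn_gt0 // mul1n.
by have := H e re; rewrite /wt (bigD1 j) //= /alpha q1.
Qed.

(* Classification certificate for the monomials x^l of weight vector w with
   P l: those in L are admissible, certified by the dual functional of their
   position in BL; the others are inadmissible, certified by their spanning
   certificate, all of whose terms must be smaller than x^l. *)
Definition classify_ok (w : wvec) (P : pred (seq nat)) (L BL : seq (seq nat))
    (F : seq (seq (seq nat))) (C : seq nat -> option span_cert) : bool :=
  (size w <= 4)%N &&
  all (fun l => P l && wt_is w l ==>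
         if l \in L then adm_ok (degc w) l (nth [::] F (index l BL))
         else if C l is Some (k, a, nf, gl) then inadm_ok l (map (nth [::] BL) nf ++ gl) k a
         else false)
      (below (nseq 5 (2 ^ size w).-1)).

Lemma classify w P L BL F C : classify_ok w P L BL F C ->
  forall x : mon5, (forall i, wt x i = wfun w i) -> P (exps x) ->
  (admissible x <-> exps x \in L).
Proof.
move=> /andP [sw /allP Hcl] x Hw Px.
have Hb j : (x j < 2 ^ size w)%N.
  by apply: wt_bound => i Hi; rewrite Hw /wfun nth_default.
have ox : small5 (exps x).
  rewrite /small5 size_exps; apply/allP => e /mapP [i _ ->].
  by apply: leq_trans (Hb _) _; rewrite -[16%N]/(2 ^ 4)%N leq_exp2l.
have wx : wt_is w (exps x) by apply/(wt_isP sw ox); rewrite exps_K.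
have bx : exps x \in below (nseq 5 (2 ^ size w).-1).
  rewrite mem_below size_exps size_nseq eqxx; apply/forallP => i.
  by rewrite nth_exps nth_nseq ltn_ord -ltnS prednK ?expn_gt0.
rewrite -[x in admissible x]exps_K.
have := implyP (Hcl _ bx) (introT andP (conj Px wx)).
case: ifP => [_ /adm_okP Ha //|_].
case: (C _) => [[[[k a] nf] gl] /inadm_okP Hi|//].
by split => // Ha; exfalso; exact: Ha Hi.
Qed.

Definition xab_list (a b : nat) : seq nat :=
  [seq (if (i == a) || (i == b) then 0 else 1)%N | i <- iota 0 5].

Definition pairs5 : seq (nat * nat) := [seq (a, b) | a <- iota 0 5, b <- iota 0 5].

Definition basis1 : seq (seq nat) :=
  [seq xab_list ab.1 ab.2 | ab <- pairs5 & (ab.1 < ab.2)%N].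

Definition duals1 : seq (seq (seq nat)) := map (fun l => [:: l]) basis1.

Definition no_cert (l : seq nat) : option span_cert := None.

Lemma dim_ok1 : dim_ok (three_d 1) basis1 duals1 no_cert.
Proof. by vm_compute. Qed.

Lemma classify_ok1 : classify_ok (three_d 1) predT basis1 basis1 duals1 no_cert.
Proof. by vm_compute. Qed.

Lemma Xab_mon_of (a b : 'I_5) : Xab a b = mon_of (xab_list a b).
Proof.
by apply/mnmP => i; rewrite mnmE mon_ofE (nth_map 0%N) ?size_iota // nth_iota.
Qed.

Lemma basis1P x : exps x \in basis1 <-> exists a b : 'I_5, (a < b)%N /\ x = Xab a b.
Proof.
split => [/mapP [[a b]] | [a [b [ab ->]]]].
  rewrite mem_filter => /andP [/= ab /allpairsP [[a' b'] [Ha Hb [Ea Eb]]]] Hx.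
  subst a' b'.
  move: Ha Hb; rewrite !mem_iota /= !add0n => Ha Hb.
  by exists (Ordinal Ha), (Ordinal Hb); split => //; rewrite Xab_mon_of -Hx exps_K.
rewrite Xab_mon_of mon_of_K ?size_map ?size_iota //; apply/mapP.
exists (nat_of_ord a, nat_of_ord b) => //; rewrite mem_filter ab /=.
by apply/allpairsP; exists (nat_of_ord a, nat_of_ord b); rewrite !mem_iota /= !add0n !ltn_ord.
Qed.

Definition basis2 : seq (seq nat) := [::
  [:: 0; 0; 3; 3; 3]; [:: 0; 1; 2; 3; 3]; [:: 0; 1; 3; 2; 3]; [:: 0; 1; 3; 3; 2];
  [:: 0; 3; 0; 3; 3]; [:: 0; 3; 1; 2; 3]; [:: 0; 3; 1; 3; 2]; [:: 0; 3; 3; 0; 3];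
  [:: 0; 3; 3; 1; 2]; [:: 0; 3; 3; 3; 0]; [:: 1; 0; 2; 3; 3]; [:: 1; 0; 3; 2; 3];
  [:: 1; 0; 3; 3; 2]; [:: 1; 1; 2; 2; 3]; [:: 1; 1; 2; 3; 2]; [:: 1; 1; 3; 2; 2];
  [:: 1; 2; 0; 3; 3]; [:: 1; 2; 1; 2; 3]; [:: 1; 2; 1; 3; 2]; [:: 1; 2; 2; 1; 3];
  [:: 1; 2; 2; 3; 1]; [:: 1; 2; 3; 0; 3]; [:: 1; 2; 3; 1; 2]; [:: 1; 2; 3; 2; 1];
  [:: 1; 2; 3; 3; 0]; [:: 1; 3; 0; 2; 3]; [:: 1; 3; 0; 3; 2]; [:: 1; 3; 1; 2; 2];
  [:: 1; 3; 2; 0; 3]; [:: 1; 3; 2; 1; 2]; [:: 1; 3; 2; 2; 1]; [:: 1; 3; 2; 3; 0];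
  [:: 1; 3; 3; 0; 2]; [:: 1; 3; 3; 2; 0]; [:: 3; 0; 0; 3; 3]; [:: 3; 0; 1; 2; 3];
  [:: 3; 0; 1; 3; 2]; [:: 3; 0; 3; 0; 3]; [:: 3; 0; 3; 1; 2]; [:: 3; 0; 3; 3; 0];
  [:: 3; 1; 0; 2; 3]; [:: 3; 1; 0; 3; 2]; [:: 3; 1; 1; 2; 2]; [:: 3; 1; 2; 0; 3];
  [:: 3; 1; 2; 1; 2]; [:: 3; 1; 2; 2; 1]; [:: 3; 1; 2; 3; 0]; [:: 3; 1; 3; 0; 2];
  [:: 3; 1; 3; 2; 0]; [:: 3; 3; 0; 0; 3]; [:: 3; 3; 0; 1; 2]; [:: 3; 3; 0; 3; 0];
  [:: 3; 3; 1; 0; 2]; [:: 3; 3; 1; 2; 0]; [:: 3; 3; 3; 0; 0]]%N.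

Definition duals2 : seq (seq (seq nat)) := [::
  [:: [:: 0; 0; 3; 3; 3]];
  [:: [:: 0; 2; 1; 3; 3]; [:: 0; 1; 2; 3; 3]];
  [:: [:: 0; 2; 3; 1; 3]; [:: 0; 1; 3; 2; 3]];
  [:: [:: 0; 2; 3; 3; 1]; [:: 0; 1; 3; 3; 2]];
  [:: [:: 0; 3; 0; 3; 3]];
  [:: [:: 0; 3; 2; 1; 3]; [:: 0; 3; 1; 2; 3]];
  [:: [:: 0; 3; 2; 3; 1]; [:: 0; 3; 1; 3; 2]];
  [:: [:: 0; 3; 3; 0; 3]];
  [:: [:: 0; 3; 3; 2; 1]; [:: 0; 3; 3; 1; 2]];
  [:: [:: 0; 3; 3; 3; 0]];
  [:: [:: 2; 0; 1; 3; 3]; [:: 1; 0; 2; 3; 3]];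
  [:: [:: 2; 0; 3; 1; 3]; [:: 1; 0; 3; 2; 3]];
  [:: [:: 2; 0; 3; 3; 1]; [:: 1; 0; 3; 3; 2]];
  [:: [:: 2; 1; 1; 2; 3]; [:: 2; 1; 2; 1; 3]; [:: 1; 1; 1; 1; 5]; [:: 1; 1; 2; 2; 3]];
  [:: [:: 2; 1; 1; 3; 2]; [:: 2; 1; 2; 3; 1]; [:: 1; 1; 1; 5; 1]; [:: 1; 1; 2; 3; 2]];
  [:: [:: 2; 1; 3; 1; 2]; [:: 2; 1; 3; 2; 1]; [:: 1; 1; 5; 1; 1]; [:: 1; 1; 3; 2; 2]];
  [:: [:: 2; 1; 0; 3; 3]; [:: 1; 2; 0; 3; 3]];
  [:: [:: 2; 1; 1; 2; 3]; [:: 2; 2; 1; 1; 3]; [:: 1; 1; 1; 1; 5]; [:: 1; 2; 1; 2; 3]];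
  [:: [:: 2; 1; 1; 3; 2]; [:: 2; 2; 1; 3; 1]; [:: 1; 1; 1; 5; 1]; [:: 1; 2; 1; 3; 2]];
  [:: [:: 2; 1; 2; 1; 3]; [:: 2; 2; 1; 1; 3]; [:: 1; 1; 1; 1; 5]; [:: 1; 2; 2; 1; 3]];
  [:: [:: 2; 1; 2; 3; 1]; [:: 2; 2; 1; 3; 1]; [:: 1; 1; 1; 5; 1]; [:: 1; 2; 2; 3; 1]];
  [:: [:: 2; 1; 3; 0; 3]; [:: 1; 2; 3; 0; 3]];
  [:: [:: 2; 1; 3; 1; 2]; [:: 2; 2; 3; 1; 1]; [:: 1; 1; 5; 1; 1]; [:: 1; 2; 3; 1; 2]];
  [:: [:: 2; 1; 3; 2; 1]; [:: 2; 2; 3; 1; 1]; [:: 1; 1; 5; 1; 1]; [:: 1; 2; 3; 2; 1]];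
  [:: [:: 2; 1; 3; 3; 0]; [:: 1; 2; 3; 3; 0]];
  [:: [:: 2; 3; 0; 1; 3]; [:: 1; 3; 0; 2; 3]];
  [:: [:: 2; 3; 0; 3; 1]; [:: 1; 3; 0; 3; 2]];
  [:: [:: 2; 3; 1; 1; 2]; [:: 2; 3; 1; 2; 1]; [:: 1; 5; 1; 1; 1]; [:: 1; 3; 1; 2; 2]];
  [:: [:: 2; 3; 1; 0; 3]; [:: 1; 3; 2; 0; 3]];
  [:: [:: 2; 3; 1; 1; 2]; [:: 2; 3; 2; 1; 1]; [:: 1; 5; 1; 1; 1]; [:: 1; 3; 2; 1; 2]];
  [:: [:: 2; 3; 1; 2; 1]; [:: 2; 3; 2; 1; 1]; [:: 1; 5; 1; 1; 1]; [:: 1; 3; 2; 2; 1]];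
  [:: [:: 2; 3; 1; 3; 0]; [:: 1; 3; 2; 3; 0]];
  [:: [:: 2; 3; 3; 0; 1]; [:: 1; 3; 3; 0; 2]];
  [:: [:: 2; 3; 3; 1; 0]; [:: 1; 3; 3; 2; 0]];
  [:: [:: 3; 0; 0; 3; 3]];
  [:: [:: 3; 0; 2; 1; 3]; [:: 3; 0; 1; 2; 3]];
  [:: [:: 3; 0; 2; 3; 1]; [:: 3; 0; 1; 3; 2]];
  [:: [:: 3; 0; 3; 0; 3]];
  [:: [:: 3; 0; 3; 2; 1]; [:: 3; 0; 3; 1; 2]];
  [:: [:: 3; 0; 3; 3; 0]];
  [:: [:: 3; 2; 0; 1; 3]; [:: 3; 1; 0; 2; 3]];
  [:: [:: 3; 2; 0; 3; 1]; [:: 3; 1; 0; 3; 2]];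
  [:: [:: 3; 2; 1; 1; 2]; [:: 3; 2; 1; 2; 1]; [:: 5; 1; 1; 1; 1]; [:: 3; 1; 1; 2; 2]];
  [:: [:: 3; 2; 1; 0; 3]; [:: 3; 1; 2; 0; 3]];
  [:: [:: 3; 2; 1; 1; 2]; [:: 3; 2; 2; 1; 1]; [:: 5; 1; 1; 1; 1]; [:: 3; 1; 2; 1; 2]];
  [:: [:: 3; 2; 1; 2; 1]; [:: 3; 2; 2; 1; 1]; [:: 5; 1; 1; 1; 1]; [:: 3; 1; 2; 2; 1]];
  [:: [:: 3; 2; 1; 3; 0]; [:: 3; 1; 2; 3; 0]];
  [:: [:: 3; 2; 3; 0; 1]; [:: 3; 1; 3; 0; 2]];
  [:: [:: 3; 2; 3; 1; 0]; [:: 3; 1; 3; 2; 0]];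
  [:: [:: 3; 3; 0; 0; 3]];
  [:: [:: 3; 3; 0; 2; 1]; [:: 3; 3; 0; 1; 2]];
  [:: [:: 3; 3; 0; 3; 0]];
  [:: [:: 3; 3; 2; 0; 1]; [:: 3; 3; 1; 0; 2]];
  [:: [:: 3; 3; 2; 1; 0]; [:: 3; 3; 1; 2; 0]];
  [:: [:: 3; 3; 3; 0; 0]]]%N.

Definition certs2 : seq (seq nat * span_cert) := [::
  ([:: 0; 2; 1; 3; 3], (1, [:: 0; 1; 1; 3; 3], [:: 1], [:: [:: 0; 1; 1; 3; 4]; [:: 0; 1; 1; 4; 3]]));
  ([:: 0; 2; 3; 1; 3], (1, [:: 0; 1; 3; 1; 3], [:: 2], [:: [:: 0; 1; 3; 1; 4]; [:: 0; 1; 4; 1; 3]]));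
  ([:: 0; 2; 3; 3; 1], (1, [:: 0; 1; 3; 3; 1], [:: 3], [:: [:: 0; 1; 3; 4; 1]; [:: 0; 1; 4; 3; 1]]));
  ([:: 0; 3; 2; 1; 3], (1, [:: 0; 3; 1; 1; 3], [:: 5], [:: [:: 0; 3; 1; 1; 4]; [:: 0; 4; 1; 1; 3]]));
  ([:: 0; 3; 2; 3; 1], (1, [:: 0; 3; 1; 3; 1], [:: 6], [:: [:: 0; 3; 1; 4; 1]; [:: 0; 4; 1; 3; 1]]));
  ([:: 0; 3; 3; 2; 1], (1, [:: 0; 3; 3; 1; 1], [:: 8], [:: [:: 0; 3; 4; 1; 1]; [:: 0; 4; 3; 1; 1]]));
  ([:: 2; 0; 1; 3; 3], (1, [:: 1; 0; 1; 3; 3], [:: 10], [:: [:: 1; 0; 1; 3; 4]; [:: 1; 0; 1; 4; 3]]));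
  ([:: 2; 0; 3; 1; 3], (1, [:: 1; 0; 3; 1; 3], [:: 11], [:: [:: 1; 0; 3; 1; 4]; [:: 1; 0; 4; 1; 3]]));
  ([:: 2; 0; 3; 3; 1], (1, [:: 1; 0; 3; 3; 1], [:: 12], [:: [:: 1; 0; 3; 4; 1]; [:: 1; 0; 4; 3; 1]]));
  ([:: 2; 1; 0; 3; 3], (1, [:: 1; 1; 0; 3; 3], [:: 16], [:: [:: 1; 1; 0; 3; 4]; [:: 1; 1; 0; 4; 3]]));
  ([:: 2; 1; 1; 2; 3], (1, [:: 1; 1; 1; 2; 3], [:: 13; 17], [:: [:: 1; 1; 1; 2; 4]]));
  ([:: 2; 1; 1; 3; 2], (1, [:: 1; 1; 1; 3; 2], [:: 14; 18], [:: [:: 1; 1; 1; 4; 2]]));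
  ([:: 2; 1; 2; 1; 3], (1, [:: 1; 1; 2; 1; 3], [:: 13; 19], [:: [:: 1; 1; 2; 1; 4]]));
  ([:: 2; 1; 2; 3; 1], (1, [:: 1; 1; 2; 3; 1], [:: 14; 20], [:: [:: 1; 1; 2; 4; 1]]));
  ([:: 2; 1; 3; 0; 3], (1, [:: 1; 1; 3; 0; 3], [:: 21], [:: [:: 1; 1; 3; 0; 4]; [:: 1; 1; 4; 0; 3]]));
  ([:: 2; 1; 3; 1; 2], (1, [:: 1; 1; 3; 1; 2], [:: 15; 22], [:: [:: 1; 1; 4; 1; 2]]));
  ([:: 2; 1; 3; 2; 1], (1, [:: 1; 1; 3; 2; 1], [:: 15; 23], [:: [:: 1; 1; 4; 2; 1]]));
  ([:: 2; 1; 3; 3; 0], (1, [:: 1; 1; 3; 3; 0], [:: 24], [:: [:: 1; 1; 3; 4; 0]; [:: 1; 1; 4; 3; 0]]));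
  ([:: 2; 2; 1; 1; 3], (1, [:: 1; 2; 1; 1; 3], [:: 17; 19], [:: [:: 1; 2; 1; 1; 4]]));
  ([:: 2; 2; 1; 3; 1], (1, [:: 1; 2; 1; 3; 1], [:: 18; 20], [:: [:: 1; 2; 1; 4; 1]]));
  ([:: 2; 2; 3; 1; 1], (1, [:: 1; 2; 3; 1; 1], [:: 22; 23], [:: [:: 1; 2; 4; 1; 1]]));
  ([:: 2; 3; 0; 1; 3], (1, [:: 1; 3; 0; 1; 3], [:: 25], [:: [:: 1; 3; 0; 1; 4]; [:: 1; 4; 0; 1; 3]]));
  ([:: 2; 3; 0; 3; 1], (1, [:: 1; 3; 0; 3; 1], [:: 26], [:: [:: 1; 3; 0; 4; 1]; [:: 1; 4; 0; 3; 1]]));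
  ([:: 2; 3; 1; 0; 3], (1, [:: 1; 3; 1; 0; 3], [:: 28], [:: [:: 1; 3; 1; 0; 4]; [:: 1; 4; 1; 0; 3]]));
  ([:: 2; 3; 1; 1; 2], (1, [:: 1; 3; 1; 1; 2], [:: 27; 29], [:: [:: 1; 4; 1; 1; 2]]));
  ([:: 2; 3; 1; 2; 1], (1, [:: 1; 3; 1; 2; 1], [:: 27; 30], [:: [:: 1; 4; 1; 2; 1]]));
  ([:: 2; 3; 1; 3; 0], (1, [:: 1; 3; 1; 3; 0], [:: 31], [:: [:: 1; 3; 1; 4; 0]; [:: 1; 4; 1; 3; 0]]));
  ([:: 2; 3; 2; 1; 1], (1, [:: 1; 3; 2; 1; 1], [:: 29; 30], [:: [:: 1; 4; 2; 1; 1]]));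
  ([:: 2; 3; 3; 0; 1], (1, [:: 1; 3; 3; 0; 1], [:: 32], [:: [:: 1; 3; 4; 0; 1]; [:: 1; 4; 3; 0; 1]]));
  ([:: 2; 3; 3; 1; 0], (1, [:: 1; 3; 3; 1; 0], [:: 33], [:: [:: 1; 3; 4; 1; 0]; [:: 1; 4; 3; 1; 0]]));
  ([:: 3; 0; 2; 1; 3], (1, [:: 3; 0; 1; 1; 3], [:: 35], [:: [:: 3; 0; 1; 1; 4]; [:: 4; 0; 1; 1; 3]]));
  ([:: 3; 0; 2; 3; 1], (1, [:: 3; 0; 1; 3; 1], [:: 36], [:: [:: 3; 0; 1; 4; 1]; [:: 4; 0; 1; 3; 1]]));
  ([:: 3; 0; 3; 2; 1], (1, [:: 3; 0; 3; 1; 1], [:: 38], [:: [:: 3; 0; 4; 1; 1]; [:: 4; 0; 3; 1; 1]]));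
  ([:: 3; 2; 0; 1; 3], (1, [:: 3; 1; 0; 1; 3], [:: 40], [:: [:: 3; 1; 0; 1; 4]; [:: 4; 1; 0; 1; 3]]));
  ([:: 3; 2; 0; 3; 1], (1, [:: 3; 1; 0; 3; 1], [:: 41], [:: [:: 3; 1; 0; 4; 1]; [:: 4; 1; 0; 3; 1]]));
  ([:: 3; 2; 1; 0; 3], (1, [:: 3; 1; 1; 0; 3], [:: 43], [:: [:: 3; 1; 1; 0; 4]; [:: 4; 1; 1; 0; 3]]));
  ([:: 3; 2; 1; 1; 2], (1, [:: 3; 1; 1; 1; 2], [:: 42; 44], [:: [:: 4; 1; 1; 1; 2]]));
  ([:: 3; 2; 1; 2; 1], (1, [:: 3; 1; 1; 2; 1], [:: 42; 45], [:: [:: 4; 1; 1; 2; 1]]));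
  ([:: 3; 2; 1; 3; 0], (1, [:: 3; 1; 1; 3; 0], [:: 46], [:: [:: 3; 1; 1; 4; 0]; [:: 4; 1; 1; 3; 0]]));
  ([:: 3; 2; 2; 1; 1], (1, [:: 3; 1; 2; 1; 1], [:: 44; 45], [:: [:: 4; 1; 2; 1; 1]]));
  ([:: 3; 2; 3; 0; 1], (1, [:: 3; 1; 3; 0; 1], [:: 47], [:: [:: 3; 1; 4; 0; 1]; [:: 4; 1; 3; 0; 1]]));
  ([:: 3; 2; 3; 1; 0], (1, [:: 3; 1; 3; 1; 0], [:: 48], [:: [:: 3; 1; 4; 1; 0]; [:: 4; 1; 3; 1; 0]]));
  ([:: 3; 3; 0; 2; 1], (1, [:: 3; 3; 0; 1; 1], [:: 50], [:: [:: 3; 4; 0; 1; 1]; [:: 4; 3; 0; 1; 1]]));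
  ([:: 3; 3; 2; 0; 1], (1, [:: 3; 3; 1; 0; 1], [:: 52], [:: [:: 3; 4; 1; 0; 1]; [:: 4; 3; 1; 0; 1]]));
  ([:: 3; 3; 2; 1; 0], (1, [:: 3; 3; 1; 1; 0], [:: 53], [:: [:: 3; 4; 1; 1; 0]; [:: 4; 3; 1; 1; 0]]))]%N.

Fixpoint lookup (l : seq nat) (tab : seq (seq nat * span_cert)) : option span_cert :=
  if tab is (l', c) :: tab' then (if l == l' then Some c else lookup l tab') else None.

Definition cert2 (l : seq nat) : option span_cert := lookup l certs2.

Lemma dim_ok2 : dim_ok (three_d 2) basis2 duals2 cert2.
Proof. by vm_compute. Qed.

Definition exps15 : seq (seq nat) :=
  [:: [:: 1; 1; 2; 2; 3]; [:: 1; 1; 2; 3; 2]; [:: 1; 1; 3; 2; 2]; [:: 1; 2; 1; 2; 3];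
      [:: 1; 2; 1; 3; 2]; [:: 1; 2; 2; 1; 3]; [:: 1; 2; 2; 3; 1]; [:: 1; 2; 3; 1; 2];
      [:: 1; 2; 3; 2; 1]; [:: 1; 3; 1; 2; 2]; [:: 1; 3; 2; 1; 2]; [:: 1; 3; 2; 2; 1];
      [:: 3; 1; 1; 2; 2]; [:: 3; 1; 2; 1; 2]; [:: 3; 1; 2; 2; 1]]%N.

Lemma classify_ok2 :
  classify_ok (three_d 2) (all (fun e => 0 < e)%N) exps15 basis2 duals2 cert2.
Proof. by vm_compute. Qed.

Lemma list15P x : (x \in list15) = (exps x \in exps15).
Proof.
have -> : list15 = map mon_of exps15 by [].
apply/mapP/idP => [[t Ht ->]|Hin]; last by exists (exps x); rewrite ?exps_K.
have S15 : all (fun l => size l == 5%N) exps15 by [].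
by rewrite mon_of_K //; apply/eqP/(allP S15).
Qed.

Theorem proposition4 :
  ((forall x : mon5, (forall i, wt x i = wfun (three_d 1) i) ->
      (admissible x <-> exists a b : 'I_5, (a < b)%N /\ x = Xab a b))
   /\ dimQP_is (three_d 1) 10)
  /\
  ((forall x : mon5, (forall i, wt x i = wfun (three_d 2) i) ->
      (forall j : 'I_5, (0 < x j)%N) ->
      (admissible x <-> x \in list15))
   /\ dimQP_is (three_d 2) 55).
Proof.
split; split.
- move=> x Hw; rewrite -basis1P; exact: (classify classify_ok1).
- exact: dim_cert dim_ok1.
- move=> x Hw Hpos; rewrite list15P; apply: (classify classify_ok2) => //.
  by apply/allP => e /mapP [i _ ->].
- exact: dim_cert dim_ok2.
Qed.
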